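(* Let $\mathbb{K}$ be a field and $f_1,\dots,f_t\in\mathbb{K}[x,y]$ ($t\ge2$) polynomials of $y$-degree at most $d_y\ge1$, such that the coefficient of $y^{d_y}$ in $f_t$ equals $1$. Let $I=\langle f_1,\dots,f_t\rangle$. Then every $f\in I$ with $\deg_y(f)<2d_y$ can be written as $f=w_1f_1+\cdots+w_tf_t$ with all $w_i\in\mathbb{K}[x,y]$ of $y$-degree less than $d_y$. *)

(* Bivariate polynomials K[x,y] are represented as
   {poly {poly K}}: the outer variable is y, coefficients are polynomials in x.
   y-degree of p is (size p).-1; "deg_y p <= d" is "size p <= d.+1" and
   "deg_y p < d" is "size p <= d" (with the convention deg 0 = -oo). *)
From mathcomp Require Import all_boot all_order all_algebra.
Set Implicit Arguments. Unset Strict Implicit. Unset Printing Implicit Defensive.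
Import GRing.Theory.
Local Open Scope ring_scope.

Definition in_ideal (K : fieldType) (t : nat) (F : nat -> {poly {poly K}})
  (f : {poly {poly K}}) : Prop :=
  exists g : nat -> {poly {poly K}}, f = \sum_(1 <= i < t.+1) g i * F i.

(* Since f_t is monic in y, every cofactor w_i with i < t can be replaced by
   its remainder modulo f_t, the quotients being absorbed into w_t.  Then
   deg_y (w_i f_i) < 2 d_y for i < t, hence also deg_y (w_t f_t) < 2 d_y, and
   because f_t is monic of y-degree d_y this forces deg_y w_t < d_y.  The
   argument only uses that K[x] is a commutative ring. *)
From mathcomp Require Import all_boot all_order all_algebra.
Import GRing.Theory.
Set Implicit Arguments. Unset Strict Implicit. Unset Printing Implicit Defensive.
Local Open Scope ring_scope.

Import Pdiv.CommonRing Pdiv.RingMonic.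

Lemma monic_size_coef (R : nzSemiRingType) (n : nat) (p : {poly R}) :
  (size p <= n.+1)%N -> p`_n = 1 -> p \is monic /\ size p = n.+1.
Proof.
move=> size_p coef_n.
have size_pE : size p = n.+1.
  apply/eqP; rewrite eqn_leq size_p ltnNge; apply/negP => size_p_n.
  by move: coef_n; rewrite nth_default // => /eqP; rewrite eq_sym oner_eq0.
by split; first by apply/monicP; rewrite /lead_coef size_pE.
Qed.

Lemma size_mul_leq_add (R : nzSemiRingType) (m n : nat) (p q : {poly R}) :
  (size p <= m)%N -> (size q <= n.+1)%N -> (size (p * q)%R <= m + n)%N.
Proof.
move=> size_p size_q; apply: leq_trans (size_polyMleq p q) _.
by have := leq_add size_p size_q; rewrite addnS; case: (_ + _)%N.
Qed.

Lemma size_sum_nat_leq (R : nzSemiRingType) (m n k : nat) (G : nat -> {poly R}) :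
  (forall i, (m <= i < n)%N -> (size (G i) <= k)%N) ->
  (size (\sum_(m <= i < n) G i)%R <= k)%N.
Proof.
move=> size_G; apply: leq_trans (size_sum _ _ _) _.
by apply/bigmax_leqP_seq => i; rewrite mem_index_iota => /size_G.
Qed.

Lemma size_rmodp_leq (R : nzRingType) (n : nat) (p M : {poly R}) :
  size M = n.+1 -> (size (rmodp p M) <= n)%N.
Proof.
by move=> size_M; rewrite -ltnS -size_M ltn_rmodpN0 // -size_poly_gt0 size_M.
Qed.

Lemma size_mul_monic_leq (R : nzSemiRingType) (n k : nat) (p M : {poly R}) :
  M \is monic -> size M = n.+1 -> (size (p * M)%R <= k + n)%N -> (size p <= k)%N.
Proof.
move=> monic_M size_M; have [-> | p_neq0] := eqVneq p 0; first by rewrite size_poly0.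
by rewrite size_Mmonic // size_M addnS leq_add2r.
Qed.

Lemma reduce_cofactors (R : comNzRingType) (I : Type) (s : seq I)
    (M c : {poly R}) (G F : I -> {poly R}) :
  M \is monic ->
  c * M + \sum_(i <- s) G i * F i =
  (c + \sum_(i <- s) rdivp (G i) M * F i) * M + \sum_(i <- s) rmodp (G i) M * F i.
Proof.
move=> monic_M; rewrite mulrDl -addrA mulr_suml -big_split /=; congr (_ + _).
apply: eq_bigr => i _; rewrite {1}(rdivp_eq monic_M (G i)) mulrDl.
by rewrite mulrAC.
Qed.

Theorem mainTheorem5 (K : fieldType) (t dy : nat) (ht : (2 <= t)%N) (hdy : (1 <= dy)%N)
  (F : nat -> {poly {poly K}})
  (hdeg : forall i, (1 <= i <= t)%N -> (size (F i) <= dy.+1)%N)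
  (hmon : (F t)`_dy = 1)
  (f : {poly {poly K}}) (hf : in_ideal t F f) (hfdeg : (size f <= 2 * dy)%N) :
  exists w : nat -> {poly {poly K}},
    (forall i, (1 <= i <= t)%N -> (size (w i) <= dy)%N) /\
    f = \sum_(1 <= i < t.+1) w i * F i.
Proof.
case: hf => g fE.
have t_gt0 : (0 < t)%N by apply: leq_trans ht.
have [monic_Ft size_Ft] : F t \is monic /\ size (F t) = dy.+1.
  by apply: monic_size_coef hmon; apply: hdeg; rewrite t_gt0 leqnn.
pose r i := rmodp (g i) (F t).
pose W := g t + \sum_(1 <= i < t) rdivp (g i) (F t) * F i.
have fE' : f = W * F t + \sum_(1 <= i < t) r i * F i.
  by rewrite fE big_nat_recr //= addrC reduce_cofactors.
have size_rest : (size (\sum_(1 <= i < t) r i * F i)%R <= 2 * dy)%N.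
  apply: size_sum_nat_leq => i /andP[i_gt0 i_lt_t].
  rewrite mul2n -addnn; apply: size_mul_leq_add.
    exact: size_rmodp_leq size_Ft.
  by apply: hdeg; rewrite i_gt0 ltnW.
have size_W : (size W <= dy)%N.
  apply: (size_mul_monic_leq monic_Ft size_Ft); rewrite addnn -mul2n.
  have -> : W * F t = f - \sum_(1 <= i < t) r i * F i by rewrite fE' addrK.
  by apply: leq_trans (size_polyD _ _) _; rewrite size_polyN geq_max hfdeg.
exists (fun i => if i == t then W else r i); split.
  by move=> i _; case: eqP => // _; exact: size_rmodp_leq size_Ft.
rewrite fE' big_nat_recr //= eqxx addrC; congr (_ + _).
by apply: eq_big_nat => i /andP[_ i_lt_t]; rewrite ltn_eqF.
Qed.
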